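(* Let $m$ be an odd integer with $m\geq 7$, and let $p'$ be the smallest odd prime not dividing $m$. Then $p' < 0.6\cdot m$. *)

From mathcomp Require Import all_boot.

From mathcomp Require Import all_boot.
From mathcomp Require Import zify.

(* Write m = 2n + 1. Both n and n + 1 are coprime to m, and one of them is odd;
   its smallest prime factor is an odd prime not dividing m, so
   p' <= n + 1 = (m + 1) / 2, which is below 0.6 m as soon as m > 5. *)

Lemma odd_coprime_near_half (m : nat) :
  odd m -> exists2 k, odd k && coprime k m & m.-1 <= k.*2 <= m.+1.
Proof.
move=> odd_m; have m_eq : m = (m./2).*2 + 1 by rewrite -[LHS]odd_double_half odd_m addnC.
set n := m./2 in m_eq.
have cop_n : coprime n m by rewrite /coprime m_eq -muln2 mulnC gcdnMDl gcdn1.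
have cop_n1 : coprime n.+1 m.
  rewrite coprime_sym; apply: coprime_dvdr (coprimenS m).
  by apply/dvdnP; exists 2; lia.
case odd_n: (odd n).
- by exists n; [rewrite odd_n cop_n | lia].
- by exists n.+1; [rewrite /= odd_n cop_n1 | lia].
Qed.

Lemma least_odd_prime_nondvd_le {m p' k : nat} :
  (forall q : nat, prime q -> odd q -> ~~ (q %| m) -> p' <= q) ->
  1 < k -> odd k -> coprime k m -> p' <= k.
Proof.
move=> p'_min k_gt1 odd_k cop_k.
have pdiv_k := pdiv_dvd k.
apply: leq_trans (dvdn_leq (ltnW k_gt1) pdiv_k).
apply: p'_min; first exact: pdiv_prime.
  exact: dvdn_odd pdiv_k odd_k.
by rewrite -prime_coprime ?pdiv_prime // (coprime_dvdl pdiv_k).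
Qed.

Theorem mainTheorem3 (m p' : nat) :
  odd m -> 7 <= m ->
  prime p' -> odd p' -> ~~ (p' %| m) ->
  (forall q : nat, prime q -> odd q -> ~~ (q %| m) -> p' <= q) ->
  10 * p' < 6 * m.
Proof.
move=> odd_m m_ge7 _ _ _ p'_min.
have [k /andP[odd_k cop_k] /andP[k_lb k_ub]] := odd_coprime_near_half m odd_m.
have : p' <= k by apply: (least_odd_prime_nondvd_le p'_min _ odd_k cop_k); lia.
lia.
Qed.
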